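(* For diagonal physical $Q=\operatorname{diag}(\lambda_1,\lambda_2,\lambda_3)$ with $-\tfrac13<\lambda_1\le\lambda_2\le\lambda_3<\tfrac23$, $\lambda_1+\lambda_2+\lambda_3=0$, the Lagrange multiplier $\mu_1$ of its optimal density satisfies $\mu_1\to-\infty$ as $\lambda_1\to-\tfrac13$; that is, for every $M>0$ there is $\eta>0$ such that $\lambda_1+\tfrac13<\eta$ implies $\mu_1<-M$.
   Context: Points of the unit sphere $\mathbb S^2$ are written $(x,y,z)$, and $\mathrm dS$ is surface measure. For a physical $Q$ (symmetric traceless with all eigenvalues in $(-\tfrac13,\tfrac23)$) the Ball–Majumdar potential is $f(Q)=\inf\int_{\mathbb S^2}\rho\ln\rho\,\mathrm dS$ over even probability densities $\rho$ with $\int(\mathbf n\otimes\mathbf n-\tfrac13I_3)\rho\,\mathrm dS=Q$. For diagonal physical $Q=\operatorname{diag}(\lambda_1,\lambda_2,\lambda_3)$ this infimum is attained by $\rho_Q(x,y,z)=\exp(\mu_1x^2+\mu_2y^2+\mu_3z^2)/Z$, $Z=\int_{\mathbb S^2}\exp(\mu_1x^2+\mu_2y^2+\mu_3z^2)\,\mathrm dS$, where the Lagrange multipliers $\mu_1,\mu_2,\mu_3\in\mathbb R$ satisfy $\mu_1+\mu_2+\mu_3=0$ and $\int x^2\rho_Q\,\mathrm dS=\lambda_1+\tfrac13$, $\int y^2\rho_Q\,\mathrm dS=\lambda_2+\tfrac13$, $\int z^2\rho_Q\,\mathrm dS=\lambda_3+\tfrac13$. *)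

From Stdlib Require Import Reals.
From Coquelicot Require Import Coquelicot.
Open Scope R_scope.

(* Integral over the unit sphere S^2 with respect to surface measure dS,
   written in spherical coordinates:
     (x,y,z) = (sin th cos ph, sin th sin ph, cos th),  dS = sin th dth dph,
     th in [0,pi], ph in [0,2pi].
   All integrands used below are continuous, so the Riemann integral is the
   surface integral. *)
Definition sphere_int (f : R -> R -> R -> R) : R :=
  RInt (fun ph =>
    RInt (fun th => f (sin th * cos ph) (sin th * sin ph) (cos th) * sin th)
         0 PI) 0 (2 * PI).

Definition BM_Z (m1 m2 m3 : R) : R :=
  sphere_int (fun x y z => exp (m1 * x ^ 2 + m2 * y ^ 2 + m3 * z ^ 2)).

Definition BM_rho (m1 m2 m3 : R) (x y z : R) : R :=
  exp (m1 * x ^ 2 + m2 * y ^ 2 + m3 * z ^ 2) / BM_Z m1 m2 m3.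

Definition is_BM_multiplier (l1 l2 l3 m1 m2 m3 : R) : Prop :=
  m1 + m2 + m3 = 0 /\
  sphere_int (fun x y z => x ^ 2 * BM_rho m1 m2 m3 x y z) = l1 + 1/3 /\
  sphere_int (fun x y z => y ^ 2 * BM_rho m1 m2 m3 x y z) = l2 + 1/3 /\
  sphere_int (fun x y z => z ^ 2 * BM_rho m1 m2 m3 x y z) = l3 + 1/3.

From Stdlib Require Import Reals Lra.
From Coquelicot Require Import Coquelicot.
Open Scope R_scope.

(* Write q = m1 x^2 + m2 y^2 + m3 z^2.  Integrating the derivatives of x y e^q in the
   azimuth and of z (x^2 + y^2) e^q in the polar angle over the sphere gives two identities
   showing that m1 is the smallest multiplier: m2 < m1 would force <x^2> > <y^2>, and
   m3 < m1 would force <z^2> < 1/3.  With m1 + m2 + m3 = 0 this gives m1 <= q <= -2 m1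
   on the sphere, and comparing \int x^2 e^q >= e^m1 4pi/3 with Z <= e^(-2 m1) 4pi
   yields l1 + 1/3 >= e^(3 m1) / 3. *)

Lemma pow2_gt_0 x : x <> 0 -> 0 < x ^ 2.
Proof. intros Hx. rewrite <- Rsqr_pow2. apply Rsqr_pos_lt, Hx. Qed.

Lemma exp_le a b : a <= b -> exp a <= exp b.
Proof. intros [Hab | ->]; [apply Rlt_le, exp_increasing, Hab | apply Rle_refl]. Qed.

Lemma continuity_2d_pt_continuous_r (K : R -> R -> R) p t :
  continuity_2d_pt K p t -> continuous (K p) t.
Proof.
  intros HK. apply filterlim_locally. intros eps.
  destruct (HK eps) as [d Hd]. exists d. intros u Hu.
  apply Hd; [rewrite Rminus_eq_0, Rabs_R0; apply cond_pos | exact Hu].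
Qed.

Lemma ex_RInt_continuity_2d (K : R -> R -> R) p a b :
  (forall t, continuity_2d_pt K p t) -> ex_RInt (K p) a b.
Proof.
  intros HK. apply (@ex_RInt_continuous R_CompleteNormedModule).
  intros t _. apply continuity_2d_pt_continuous_r, HK.
Qed.

Lemma continuous_RInt_param (K : R -> R -> R) a b c :
  a <= b -> (forall p t, continuity_2d_pt K p t) ->
  continuous (fun p => RInt (K p) a b) c.
Proof.
  intros Hab HK. apply filterlim_locally. intros eps.
  assert (He : 0 < eps / (b - a + 1)) by (apply Rdiv_lt_0_compat; [apply cond_pos | lra]).
  destruct (uniform_continuity_2d_1d' K a b c (fun t _ => HK c t) (mkposreal _ He)) as [d Hd].
  exists d. intros v Hv. change (Rabs (v - c) < d) in Hv.
  change (Rabs (RInt (K v) a b - RInt (K c) a b) < eps).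
  rewrite <- (@RInt_minus R_CompleteNormedModule) by (apply ex_RInt_continuity_2d; auto).
  eapply Rle_lt_trans.
  { apply (abs_RInt_le_const (fun t => K v t - K c t) a b (eps / (b - a + 1))); [lra | |].
    - apply (@ex_RInt_minus R_CompleteNormedModule); apply ex_RInt_continuity_2d; auto.
    - intros t Ht. pose proof (cond_pos d).
      apply Rlt_le, (Hd t c t v Ht); [lra | exact Ht | | rewrite Rminus_eq_0, Rabs_R0; lra].
      apply Rabs_le_between'; lra. }
  pose proof (cond_pos eps).
  replace ((b - a) * (eps / (b - a + 1))) with (eps - eps / (b - a + 1)) by (field; lra).
  lra.
Qed.

Lemma RInt_gt_0_at (g : R -> R) a b c :
  a < c < b -> (forall x, a <= x <= b -> continuous g x) ->
  (forall x, a <= x <= b -> 0 <= g x) -> 0 < g c -> 0 < RInt g a b.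
Proof.
  intros [Hac Hcb] Hg Hg0 Hgc.
  assert (Hhalf : 0 < g c / 2) by lra.
  assert (Hgc_cont : continuous g c) by (apply Hg; lra).
  destruct (proj1 (filterlim_locally g (g c)) Hgc_cont (mkposreal _ Hhalf)) as [d Hd].
  set (r := Rmin (d / 2) (Rmin ((c - a) / 2) ((b - c) / 2))).
  assert (Hr : 0 < r /\ r <= d / 2 /\ r <= (c - a) / 2 /\ r <= (b - c) / 2).
  { pose proof (cond_pos d). unfold r, Rmin.
    repeat destruct Rle_dec; repeat split; lra. }
  destruct Hr as (Hr0 & Hrd & Hra & Hrb).
  assert (Hex : forall u v, a <= u -> u <= v -> v <= b -> ex_RInt g u v).
  { intros u v Hu Huv Hv. apply (@ex_RInt_continuous R_CompleteNormedModule).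
    intros z Hz. rewrite Rmin_left, Rmax_right in Hz by lra. apply Hg; lra. }
  rewrite <- (@RInt_Chasles R_CompleteNormedModule g a (c - r) b) by (apply Hex; lra).
  rewrite <- (@RInt_Chasles R_CompleteNormedModule g (c - r) (c + r) b) by (apply Hex; lra).
  assert (0 <= RInt g a (c - r))
    by (apply RInt_ge_0; [lra | apply Hex; lra | intros; apply Hg0; lra]).
  assert (0 <= RInt g (c + r) b)
    by (apply RInt_ge_0; [lra | apply Hex; lra | intros; apply Hg0; lra]).
  assert (0 < RInt g (c - r) (c + r)).
  { apply RInt_gt_0; [lra | | intros; apply Hg; lra].
    intros x Hx. assert (Hgx : Rabs (g x - g c) < g c / 2)
      by (apply Hd; change (Rabs (x - c) < d); apply Rabs_def1; lra).
    apply Rabs_def2 in Hgx. lra. }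
  unfold plus; simpl. lra.
Qed.

Lemma RInt_antiderivative (F f : R -> R) a b v :
  (forall x, Rmin a b <= x <= Rmax a b -> is_derive F x (f x)) ->
  (forall x, Rmin a b <= x <= Rmax a b -> continuous f x) ->
  F b - F a = v -> RInt f a b = v.
Proof.
  intros HF Hf <-. apply is_RInt_unique.
  exact (@is_RInt_derive R_CompleteNormedModule F f a b HF Hf).
Qed.

Lemma RInt_RInt_derive_param (K k : R -> R -> R) a b c d :
  c <= d ->
  (forall p t, is_derive (fun p => K p t) p (k p t)) ->
  (forall p t, continuity_2d_pt K p t) ->
  (forall p t, continuity_2d_pt k p t) ->
  RInt (fun p => RInt (k p) c d) a b = RInt (K b) c d - RInt (K a) c d.
Proof.
  intros Hcd HKk HK Hk.
  apply (RInt_antiderivative (fun p => RInt (K p) c d));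
    [| intros p _; apply continuous_RInt_param; auto | reflexivity].
  intros p _.
  assert (HD : forall u t, Derive (fun z => K z t) u = k u t).
  { intros u t. apply is_derive_unique, HKk. }
  replace (RInt (k p) c d) with (RInt (fun t => Derive (fun u => K u t) p) c d)
    by (apply RInt_ext; intros; apply HD).
  apply is_derive_RInt_param.
  - apply filter_forall. intros u t _. eexists. apply HKk.
  - intros t _. apply continuity_2d_pt_ext with (f := k); [intros; symmetry; apply HD | apply Hk].
  - apply filter_forall. intros u. apply ex_RInt_continuity_2d. auto.
Qed.

Lemma eq_modulo_sin2_cos2 t a b k : a - b = k * (sin t ^ 2 + cos t ^ 2 - 1) -> a = b.
Proof.
  intros H. pose proof (sin2_cos2 t) as Ht. unfold Rsqr in Ht. simpl in H.
  rewrite !Rmult_1_r, Ht in H. lra.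
Qed.

Definition sph_integrand (g : R -> R -> R -> R) (ph th : R) : R :=
  g (sin th * cos ph) (sin th * sin ph) (cos th) * sin th.

Definition sph_continuous (g : R -> R -> R -> R) : Prop :=
  forall ph th,
    continuity_2d_pt (fun ph th => g (sin th * cos ph) (sin th * sin ph) (cos th)) ph th.

Lemma sphere_int_iterated g :
  sphere_int g = RInt (fun ph => RInt (sph_integrand g ph) 0 PI) 0 (2 * PI).
Proof. reflexivity. Qed.

Lemma sph_continuous_comp (h : R -> R) g :
  (forall r, continuity_pt h r) -> sph_continuous g ->
  sph_continuous (fun x y z => h (g x y z)).
Proof. intros Hh Hg ph th. apply (continuity_1d_2d_pt_comp h); auto. Qed.

Lemma sph_continuous_const c : sph_continuous (fun _ _ _ => c).
Proof. intros ph th. apply continuity_2d_pt_const. Qed.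

Lemma sph_continuous_plus g1 g2 : sph_continuous g1 -> sph_continuous g2 ->
  sph_continuous (fun x y z => g1 x y z + g2 x y z).
Proof. intros H1 H2 ph th. apply continuity_2d_pt_plus; auto. Qed.

Lemma sph_continuous_minus g1 g2 : sph_continuous g1 -> sph_continuous g2 ->
  sph_continuous (fun x y z => g1 x y z - g2 x y z).
Proof. intros H1 H2 ph th. apply continuity_2d_pt_minus; auto. Qed.

Lemma sph_continuous_mult g1 g2 : sph_continuous g1 -> sph_continuous g2 ->
  sph_continuous (fun x y z => g1 x y z * g2 x y z).
Proof. intros H1 H2 ph th. apply continuity_2d_pt_mult; auto. Qed.

Lemma sph_continuous_pow g n : sph_continuous g -> sph_continuous (fun x y z => g x y z ^ n).
Proof.
  apply (sph_continuous_comp (fun r => r ^ n)).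
  intros r. apply derivable_continuous_pt, derivable_pt_pow.
Qed.

Lemma sph_continuous_exp g : sph_continuous g -> sph_continuous (fun x y z => exp (g x y z)).
Proof.
  apply sph_continuous_comp. intros r. apply derivable_continuous_pt, derivable_pt_exp.
Qed.

Lemma continuity_2d_pt_sin_r ph th : continuity_2d_pt (fun _ th => sin th) ph th.
Proof. apply (continuity_1d_2d_pt_comp sin), continuity_2d_pt_id2. apply continuity_sin. Qed.

Lemma sph_continuous_x : sph_continuous (fun x _ _ => x).
Proof.
  intros ph th. apply continuity_2d_pt_mult; [apply continuity_2d_pt_sin_r |].
  apply (continuity_1d_2d_pt_comp cos), continuity_2d_pt_id1. apply continuity_cos.
Qed.

Lemma sph_continuous_y : sph_continuous (fun _ y _ => y).
Proof.
  intros ph th. apply continuity_2d_pt_mult; [apply continuity_2d_pt_sin_r |].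
  apply (continuity_1d_2d_pt_comp sin), continuity_2d_pt_id1. apply continuity_sin.
Qed.

Lemma sph_continuous_z : sph_continuous (fun _ _ z => z).
Proof.
  intros ph th. apply (continuity_1d_2d_pt_comp cos), continuity_2d_pt_id2. apply continuity_cos.
Qed.

Lemma continuity_2d_pt_sph_integrand g :
  sph_continuous g -> forall ph th, continuity_2d_pt (sph_integrand g) ph th.
Proof. intros Hg ph th. apply continuity_2d_pt_mult; [apply Hg | apply continuity_2d_pt_sin_r]. Qed.

Lemma continuous_sph_inner g ph : sph_continuous g ->
  continuous (fun ph => RInt (sph_integrand g ph) 0 PI) ph.
Proof.
  intros Hg. apply continuous_RInt_param; [pose proof PI_RGT_0; lra |].
  apply continuity_2d_pt_sph_integrand, Hg.
Qed.

Lemma ex_RInt_sph_inner g ph : sph_continuous g -> ex_RInt (sph_integrand g ph) 0 PI.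
Proof. intros Hg. apply ex_RInt_continuity_2d, continuity_2d_pt_sph_integrand, Hg. Qed.

Lemma ex_RInt_sph_outer g : sph_continuous g ->
  ex_RInt (fun ph => RInt (sph_integrand g ph) 0 PI) 0 (2 * PI).
Proof.
  intros Hg. apply (@ex_RInt_continuous R_CompleteNormedModule).
  intros ph _. apply continuous_sph_inner, Hg.
Qed.

Lemma sphere_int_ext g1 g2 :
  (forall x y z, g1 x y z = g2 x y z) -> sphere_int g1 = sphere_int g2.
Proof.
  intros H. unfold sphere_int. apply RInt_ext. intros. apply RInt_ext. intros. now rewrite H.
Qed.

Lemma sphere_int_plus g1 g2 : sph_continuous g1 -> sph_continuous g2 ->
  sphere_int (fun x y z => g1 x y z + g2 x y z) = sphere_int g1 + sphere_int g2.
Proof.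
  intros H1 H2. rewrite !sphere_int_iterated.
  rewrite <- (@RInt_plus R_CompleteNormedModule) by (apply ex_RInt_sph_outer; auto).
  apply RInt_ext. intros ph _.
  rewrite <- (@RInt_plus R_CompleteNormedModule) by (apply ex_RInt_sph_inner; auto).
  apply RInt_ext. intros th _. unfold sph_integrand, plus; simpl. ring.
Qed.

Lemma sphere_int_scal k g : sph_continuous g ->
  sphere_int (fun x y z => k * g x y z) = k * sphere_int g.
Proof.
  intros Hg. rewrite !sphere_int_iterated.
  rewrite <- (@RInt_scal R_CompleteNormedModule) by (apply ex_RInt_sph_outer; auto).
  apply RInt_ext. intros ph _.
  rewrite <- (@RInt_scal R_CompleteNormedModule) by (apply ex_RInt_sph_inner; auto).
  apply RInt_ext. intros th _. unfold sph_integrand, scal; simpl. unfold mult; simpl. ring.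
Qed.

Lemma sph_point_norm ph th :
  (sin th * cos ph) ^ 2 + (sin th * sin ph) ^ 2 + cos th ^ 2 = 1.
Proof.
  pose proof (sin2_cos2 th) as Hth. pose proof (sin2_cos2 ph) as Hph. unfold Rsqr in *.
  transitivity (sin th * sin th * (sin ph * sin ph + cos ph * cos ph) + cos th * cos th);
    [ring | rewrite Hph; lra].
Qed.

Lemma sphere_int_le g1 g2 : sph_continuous g1 -> sph_continuous g2 ->
  (forall x y z, x ^ 2 + y ^ 2 + z ^ 2 = 1 -> g1 x y z <= g2 x y z) ->
  sphere_int g1 <= sphere_int g2.
Proof.
  intros H1 H2 Hle. pose proof PI_RGT_0. rewrite !sphere_int_iterated.
  apply RInt_le; [lra | apply ex_RInt_sph_outer; auto | apply ex_RInt_sph_outer; auto |].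
  intros ph _.
  apply RInt_le; [lra | apply ex_RInt_sph_inner; auto | apply ex_RInt_sph_inner; auto |].
  intros th Hth. unfold sph_integrand.
  apply Rmult_le_compat_r; [apply sin_ge_0; lra | apply Hle, sph_point_norm].
Qed.

Lemma sphere_int_gt_0 g : sph_continuous g ->
  (forall x y z, 0 <= g x y z) ->
  (forall x y z, x <> 0 -> y <> 0 -> z <> 0 -> 0 < g x y z) ->
  0 < sphere_int g.
Proof.
  intros Hg Hge Hgt. pose proof PI_RGT_0.
  assert (Hsin : 0 < sin (PI / 4)) by (apply sin_gt_0; lra).
  assert (Hcos : 0 < cos (PI / 4)) by (apply cos_gt_0; lra).
  assert (Hnonneg : forall ph th, 0 <= th <= PI -> 0 <= sph_integrand g ph th).
  { intros ph th Hth. apply Rmult_le_pos; [apply Hge | apply sin_ge_0; lra]. }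
  rewrite sphere_int_iterated.
  apply (RInt_gt_0_at _ _ _ (PI / 4)); [lra | intros; apply continuous_sph_inner, Hg | |].
  - intros ph _. apply RInt_ge_0; [lra | apply ex_RInt_sph_inner, Hg |].
    intros th Hth. apply Hnonneg. lra.
  - apply (RInt_gt_0_at _ _ _ (PI / 4)); [lra | | intros; apply Hnonneg; lra |].
    + intros. apply continuity_2d_pt_continuous_r, continuity_2d_pt_sph_integrand, Hg.
    + apply Rmult_lt_0_compat; [| exact Hsin].
      apply Hgt; apply Rgt_not_eq; try apply Rmult_lt_0_compat; assumption.
Qed.

Lemma sphere_int_1 : sphere_int (fun _ _ _ => 1) = 4 * PI.
Proof.
  rewrite sphere_int_iterated. unfold sph_integrand.
  transitivity (RInt (fun _ => 2) 0 (2 * PI)).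
  2: { rewrite RInt_const. unfold scal; simpl. unfold mult; simpl. ring. }
  apply RInt_ext. intros ph _.
  apply (RInt_antiderivative (fun th => - cos th)).
  - intros. auto_derive; auto. ring.
  - intros. apply (@ex_derive_continuous R_AbsRing R_NormedModule). auto_derive; auto.
  - rewrite cos_PI, cos_0. ring.
Qed.

Lemma sphere_int_x2 : sphere_int (fun x _ _ => x ^ 2) = 4 / 3 * PI.
Proof.
  rewrite sphere_int_iterated. unfold sph_integrand.
  transitivity (RInt (fun ph => 4 / 3 * cos ph ^ 2) 0 (2 * PI)).
  - apply RInt_ext. intros ph _.
    apply (RInt_antiderivative (fun th => cos ph ^ 2 * (cos th ^ 3 / 3 - cos th))).
    + intros th _. auto_derive; auto.
      apply (eq_modulo_sin2_cos2 th _ _ (- (cos ph ^ 2 * sin th))). field.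
    + intros. apply (@ex_derive_continuous R_AbsRing R_NormedModule). auto_derive; auto.
    + rewrite cos_PI, cos_0. field.
  - apply (RInt_antiderivative (fun ph => 2 / 3 * (ph + sin ph * cos ph))).
    + intros ph _. auto_derive; auto.
      apply (eq_modulo_sin2_cos2 ph _ _ (- (2 / 3))). field.
    + intros. apply (@ex_derive_continuous R_AbsRing R_NormedModule). auto_derive; auto.
    + rewrite sin_2PI, sin_0. field.
Qed.

Definition BM_weight (m1 m2 m3 x y z : R) : R :=
  exp (m1 * x ^ 2 + m2 * y ^ 2 + m3 * z ^ 2).

Lemma sph_continuous_BM_weight m1 m2 m3 : sph_continuous (BM_weight m1 m2 m3).
Proof.
  apply sph_continuous_exp.
  repeat apply sph_continuous_plus; apply sph_continuous_mult;
    auto using sph_continuous_const, sph_continuous_pow, sph_continuous_x,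
      sph_continuous_y, sph_continuous_z.
Qed.

Ltac sph_continuity :=
  repeat first
    [ assumption | apply sph_continuous_BM_weight
    | apply sph_continuous_minus | apply sph_continuous_plus | apply sph_continuous_mult
    | apply sph_continuous_pow | apply sph_continuous_const
    | apply sph_continuous_x | apply sph_continuous_y | apply sph_continuous_z ].

Lemma sphere_int_dphi_BM_weight m1 m2 m3 :
  sphere_int (fun x y z =>
    (x ^ 2 - y ^ 2 + 2 * (m2 - m1) * x ^ 2 * y ^ 2) * BM_weight m1 m2 m3 x y z) = 0.
Proof.
  rewrite sphere_int_iterated.
  rewrite (RInt_RInt_derive_param
             (sph_integrand (fun x y z => x * y * BM_weight m1 m2 m3 x y z))).
  - apply Rminus_diag_eq. unfold sph_integrand.
    rewrite cos_2PI, sin_2PI, cos_0, sin_0. reflexivity.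
  - pose proof PI_RGT_0. lra.
  - intros ph th. unfold sph_integrand, BM_weight. auto_derive; auto. simpl. ring.
  - apply continuity_2d_pt_sph_integrand. sph_continuity.
  - apply continuity_2d_pt_sph_integrand. sph_continuity.
Qed.

Lemma sphere_int_dtheta_BM_weight m1 m2 m3 :
  sphere_int (fun x y z =>
    (3 * z ^ 2 - 1 + 2 * z ^ 2 * ((m1 - m3) * x ^ 2 + (m2 - m3) * y ^ 2))
    * BM_weight m1 m2 m3 x y z) = 0.
Proof.
  rewrite sphere_int_iterated.
  transitivity (RInt (fun _ => 0) 0 (2 * PI)).
  - apply RInt_ext. intros ph _.
    apply (RInt_antiderivative (fun th =>
      cos th * sin th ^ 2 * BM_weight m1 m2 m3 (sin th * cos ph) (sin th * sin ph) (cos th))).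
    + intros th _. unfold sph_integrand, BM_weight. auto_derive; auto.
      simpl. set (w := exp _).
      apply (eq_modulo_sin2_cos2 th _ _ (- (w * sin th))).
      apply (eq_modulo_sin2_cos2 ph _ _ (2 * m3 * cos th ^ 2 * sin th ^ 3 * w)).
      ring.
    + intros th _. apply continuity_2d_pt_continuous_r, continuity_2d_pt_sph_integrand.
      sph_continuity.
    + rewrite sin_PI, sin_0. ring.
  - rewrite RInt_const. apply Rmult_0_r.
Qed.

Lemma BM_moment_x_gt_y m1 m2 m3 : m2 < m1 ->
  sphere_int (fun x y z => y ^ 2 * BM_weight m1 m2 m3 x y z)
  < sphere_int (fun x y z => x ^ 2 * BM_weight m1 m2 m3 x y z).
Proof.
  intros H21.
  set (P := sphere_int (fun x y z => x ^ 2 * y ^ 2 * BM_weight m1 m2 m3 x y z)).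
  assert (HP : 0 < P).
  { apply sphere_int_gt_0; [sph_continuity | |]; intros x y z; unfold BM_weight.
    - pose proof (exp_pos (m1 * x ^ 2 + m2 * y ^ 2 + m3 * z ^ 2)).
      pose proof (pow2_ge_0 x). pose proof (pow2_ge_0 y).
      apply Rmult_le_pos; [apply Rmult_le_pos |]; lra.
    - intros Hx Hy _.
      apply Rmult_lt_0_compat; [apply Rmult_lt_0_compat; apply pow2_gt_0 | apply exp_pos];
        assumption. }
  assert (Hid : sphere_int (fun x y z => x ^ 2 * BM_weight m1 m2 m3 x y z)
      + (-1 * sphere_int (fun x y z => y ^ 2 * BM_weight m1 m2 m3 x y z)
         + 2 * (m2 - m1) * P) = 0).
  { rewrite <- (sphere_int_dphi_BM_weight m1 m2 m3). unfold P.
    rewrite <- !sphere_int_scal, <- !sphere_int_plus by sph_continuity.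
    apply sphere_int_ext. intros. ring. }
  nra.
Qed.

Lemma BM_moment_z_lt_third m1 m2 m3 : m3 < m1 -> m3 < m2 ->
  3 * sphere_int (fun x y z => z ^ 2 * BM_weight m1 m2 m3 x y z)
  < sphere_int (BM_weight m1 m2 m3).
Proof.
  intros H31 H32.
  set (C := sphere_int (fun x y z =>
    z ^ 2 * ((m1 - m3) * x ^ 2 + (m2 - m3) * y ^ 2) * BM_weight m1 m2 m3 x y z)).
  assert (HC : 0 < C).
  { apply sphere_int_gt_0; [sph_continuity | |]; intros x y z; unfold BM_weight.
    - pose proof (exp_pos (m1 * x ^ 2 + m2 * y ^ 2 + m3 * z ^ 2)).
      pose proof (pow2_ge_0 x). pose proof (pow2_ge_0 y). pose proof (pow2_ge_0 z).
      apply Rmult_le_pos; [apply Rmult_le_pos |]; nra.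
    - intros Hx _ Hz. pose proof (pow2_gt_0 x Hx). pose proof (pow2_ge_0 y).
      apply Rmult_lt_0_compat; [| apply exp_pos].
      apply Rmult_lt_0_compat; [apply pow2_gt_0, Hz | nra]. }
  assert (Hid : 3 * sphere_int (fun x y z => z ^ 2 * BM_weight m1 m2 m3 x y z)
      + (-1 * sphere_int (BM_weight m1 m2 m3) + 2 * C) = 0).
  { rewrite <- (sphere_int_dtheta_BM_weight m1 m2 m3). unfold C.
    rewrite <- !sphere_int_scal, <- !sphere_int_plus by sph_continuity.
    apply sphere_int_ext. intros. ring. }
  lra.
Qed.

Lemma BM_Z_gt_0 m1 m2 m3 : 0 < BM_Z m1 m2 m3.
Proof.
  apply sphere_int_gt_0; [sph_continuity | intros; apply Rlt_le, exp_pos | intros; apply exp_pos].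
Qed.

Lemma BM_moment h m1 m2 m3 : sph_continuous h ->
  sphere_int (fun x y z => h x y z * BM_rho m1 m2 m3 x y z)
  = sphere_int (fun x y z => h x y z * BM_weight m1 m2 m3 x y z) / BM_Z m1 m2 m3.
Proof.
  intros Hh. unfold Rdiv. rewrite Rmult_comm, <- sphere_int_scal by sph_continuity.
  apply sphere_int_ext. intros. unfold BM_rho, BM_weight, Rdiv. ring.
Qed.

Lemma BM_second_moments l1 l2 l3 m1 m2 m3 : is_BM_multiplier l1 l2 l3 m1 m2 m3 ->
  sphere_int (fun x y z => x ^ 2 * BM_weight m1 m2 m3 x y z) = BM_Z m1 m2 m3 * (l1 + 1/3) /\
  sphere_int (fun x y z => y ^ 2 * BM_weight m1 m2 m3 x y z) = BM_Z m1 m2 m3 * (l2 + 1/3) /\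
  sphere_int (fun x y z => z ^ 2 * BM_weight m1 m2 m3 x y z) = BM_Z m1 m2 m3 * (l3 + 1/3).
Proof.
  intros (_ & Hx & Hy & Hz). pose proof (BM_Z_gt_0 m1 m2 m3) as HZ.
  rewrite BM_moment in Hx, Hy, Hz by sph_continuity.
  rewrite <- Hx, <- Hy, <- Hz. repeat split; field; lra.
Qed.

Lemma BM_multiplier_min l1 l2 l3 m1 m2 m3 : is_BM_multiplier l1 l2 l3 m1 m2 m3 ->
  l1 <= l2 -> 0 <= l3 -> m1 <= m2 /\ m1 <= m3.
Proof.
  intros Hmult H12 H3.
  pose proof (BM_Z_gt_0 m1 m2 m3) as HZ.
  destruct (BM_second_moments _ _ _ _ _ _ Hmult) as (Hx & Hy & Hz).
  assert (Hm12 : m1 <= m2).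
  { apply Rnot_lt_le. intros H21. pose proof (BM_moment_x_gt_y m1 m2 m3 H21) as Hlt.
    rewrite Hx, Hy in Hlt. nra. }
  split; [exact Hm12 |].
  apply Rnot_lt_le. intros H31.
  pose proof (BM_moment_z_lt_third m1 m2 m3 H31 ltac:(lra)) as Hlt.
  change (sphere_int (BM_weight m1 m2 m3)) with (BM_Z m1 m2 m3) in Hlt.
  rewrite Hz in Hlt. nra.
Qed.

Lemma BM_exponent_bounds m1 m2 m3 x y z :
  m1 <= m2 -> m1 <= m3 -> m1 + m2 + m3 = 0 -> x ^ 2 + y ^ 2 + z ^ 2 = 1 ->
  m1 <= m1 * x ^ 2 + m2 * y ^ 2 + m3 * z ^ 2 <= -2 * m1.
Proof.
  intros H12 H13 Hsum Hsph.
  pose proof (pow2_ge_0 x). pose proof (pow2_ge_0 y). pose proof (pow2_ge_0 z).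
  split; nra.
Qed.

Lemma BM_multiplier_lower_bound l1 l2 l3 m1 m2 m3 : is_BM_multiplier l1 l2 l3 m1 m2 m3 ->
  l1 <= l2 -> 0 <= l3 -> exp (3 * m1) / 3 <= l1 + 1/3.
Proof.
  intros Hmult H12 H3.
  destruct (BM_multiplier_min _ _ _ _ _ _ Hmult H12 H3) as [Hm12 Hm13].
  destruct (BM_second_moments _ _ _ _ _ _ Hmult) as [Hx _].
  destruct Hmult as [Hsum _].
  pose proof (BM_Z_gt_0 m1 m2 m3) as HZ.
  assert (Hbounds := fun x y z => BM_exponent_bounds m1 m2 m3 x y z Hm12 Hm13 Hsum).
  assert (HXlow : exp m1 * (4 / 3 * PI)
                  <= sphere_int (fun x y z => x ^ 2 * BM_weight m1 m2 m3 x y z)).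
  { rewrite <- sphere_int_x2, <- sphere_int_scal by sph_continuity.
    apply sphere_int_le; [sph_continuity | sph_continuity |].
    intros x y z Hs. rewrite Rmult_comm. unfold BM_weight.
    apply Rmult_le_compat_l; [apply pow2_ge_0 | apply exp_le, Hbounds, Hs]. }
  assert (HZup : BM_Z m1 m2 m3 <= exp (-2 * m1) * (4 * PI)).
  { rewrite <- sphere_int_1, <- sphere_int_scal by sph_continuity.
    apply sphere_int_le; [sph_continuity | sph_continuity |].
    intros x y z Hs. rewrite Rmult_1_r. apply exp_le, Hbounds, Hs. }
  assert (Hexp : exp m1 = exp (3 * m1) * exp (-2 * m1)) by (rewrite <- exp_plus; f_equal; ring).
  pose proof (exp_pos (3 * m1)). pose proof (exp_pos (-2 * m1)). pose proof PI_RGT_0.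
  rewrite Hx, Hexp in HXlow.
  assert (Hl1 : 0 < l1 + 1/3) by nra.
  apply (Rmult_le_reg_l (exp (-2 * m1) * (4 * PI))); nra.
Qed.

Theorem lemma2p2 :
  forall M : R, 0 < M ->
  exists eta : R, 0 < eta /\
    forall l1 l2 l3 m1 m2 m3 : R,
      -1/3 < l1 -> l1 <= l2 -> l2 <= l3 -> l3 < 2/3 ->
      l1 + l2 + l3 = 0 ->
      is_BM_multiplier l1 l2 l3 m1 m2 m3 ->
      l1 + 1/3 < eta ->
      m1 < - M.
Proof.
  intros M _. exists (exp (-3 * M) / 3). split; [pose proof (exp_pos (-3 * M)); lra |].
  intros l1 l2 l3 m1 m2 m3 _ H12 H23 _ Hsum Hmult Heta.
  pose proof (BM_multiplier_lower_bound _ _ _ _ _ _ Hmult H12 ltac:(lra)) as Hbound.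
  assert (Hexp : exp (3 * m1) < exp (-3 * M)) by lra.
  apply exp_lt_inv in Hexp. lra.
Qed.
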